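(* Let $\sigma\in S_K$ be a permutation pattern whose length is at most one less than the length of the longest element of $S_K$, i.e. $\operatorname{len}(\sigma)\ge\binom{K}{2}-1$. Then $\sigma$ admits a bountiful width system.
   Context: $\operatorname{len}(\sigma)$ is the Coxeter length (number of inversions) of $\sigma$; the longest element of $S_K$ has length $\binom K2$. For $x=[x_1,\dots,x_N]\in S_N$ and $\tau\in S_k$, an instance of $\tau$ in $x$ is a tuple of positions $P=(P_1<\dots<P_k)$ with $(x_{P_1},\dots,x_{P_k})$ in the same relative order as $\tau$. A width system for $\tau$ is a finite sequence of pairs $(a_1,b_1),\dots,(a_m,b_m)$ with $1\le a_l<b_l\le k$, assigning to each instance $P$ the tuple $w(P)=(P_{b_1}-P_{a_1},\dots,P_{b_m}-P_{a_m})$. An instance is minimal in $x$ if $w(P)$ is lexicographically minimal among all instances of $\tau$ in $x$, and locally minimal if it is a minimal instance of $\tau$ in the consecutive segment $[x_{P_1},x_{P_1+1},\dots,x_{P_k}]$. The width system is bountiful if for every $x\in S_N$ (any $N$), every locally minimal instance $P$ and every position $t$ with $P_1<t<P_k$, $t\notin\{P_1,\dots,P_k\}$, either $x_t<x_{P_j}$ for all $j$ with $P_j<t$, or $x_t>x_{P_j}$ for all $j$ with $P_j>t$. $\tau$ admits a bountiful width system if some width system for $\tau$ is bountiful. *)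

From mathcomp Require Import all_boot all_order all_fingroup.
Set Implicit Arguments. Unset Strict Implicit. Unset Printing Implicit Defensive.

Definition coxeter_len (K : nat) (s : 'S_K) : nat :=
  #|[set ij : 'I_K * 'I_K | (ij.1 < ij.2) && (s ij.2 < s ij.1)]|.

(* The one-line notation [x_1,...,x_N] of x in S_N, as a sequence of values
   (values and positions are 0-based). *)
Definition perm_seq (N : nat) (x : 'S_N) : seq nat :=
  [seq val (x i) | i <- enum 'I_N].

Definition is_instance (k : nat) (tau : 'S_k) (s : seq nat) (P : 'I_k -> nat)
  : Prop :=
  (forall i, P i < size s) /\
  (forall i j : 'I_k, i < j -> P i < P j) /\
  (forall i j : 'I_k, (nth 0 s (P i) < nth 0 s (P j)) = (tau i < tau j)).

Definition width_system (k : nat) (w : seq ('I_k * 'I_k)) : bool :=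
  all (fun p : 'I_k * 'I_k => p.1 < p.2) w.

Definition widths (k : nat) (w : seq ('I_k * 'I_k)) (P : 'I_k -> nat) : seq nat :=
  [seq P p.2 - P p.1 | p <- w].

Fixpoint lex_le (u v : seq nat) : bool :=
  match u, v with
  | [::], _ => true
  | _ :: _, [::] => false
  | a :: u', b :: v' => (a < b) || ((a == b) && lex_le u' v')
  end.

Definition minimal_instance (k : nat) (tau : 'S_k) (w : seq ('I_k * 'I_k))
  (s : seq nat) (P : 'I_k -> nat) : Prop :=
  is_instance tau s P /\
  forall Q, is_instance tau s Q -> lex_le (widths w P) (widths w Q).

(* Locally minimal: P is a minimal instance of tau in the consecutive segment
   s_{P_1}, ..., s_{P_k} of s (positions shifted by P_1). *)
Definition locally_minimal (k : nat) (tau : 'S_k) (w : seq ('I_k * 'I_k))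
  (s : seq nat) (P : 'I_k -> nat) : Prop :=
  is_instance tau s P /\
  forall a b : nat,
    (exists i, P i = a) -> (exists j, P j = b) -> (forall i, a <= P i <= b) ->
    minimal_instance tau w (drop a (take b.+1 s)) (fun i => P i - a).

Definition bountiful (k : nat) (tau : 'S_k) (w : seq ('I_k * 'I_k)) : Prop :=
  forall (N : nat) (x : 'S_N) (P : 'I_k -> nat),
    locally_minimal tau w (perm_seq x) P ->
    forall t : nat,
      (exists i j, P i < t < P j) ->
      (forall i, P i != t) ->
      (forall j, P j < t -> nth 0 (perm_seq x) t < nth 0 (perm_seq x) (P j)) \/
      (forall j, t < P j -> nth 0 (perm_seq x) (P j) < nth 0 (perm_seq x) t).

Definition admits_bountiful (k : nat) (tau : 'S_k) : Prop :=
  exists w : seq ('I_k * 'I_k), width_system w /\ bountiful tau w.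

From mathcomp Require Import all_boot all_order all_fingroup zify.
Set Implicit Arguments. Unset Strict Implicit. Unset Printing Implicit Defensive.

(* Since len(sigma) + #(non-inversions of sigma) = C(K,2), sigma has at most one
   non-inversion.  An entry x_t strictly inside an instance P that is neither
   below every earlier instance entry nor above every later one sits, in value,
   strictly between some x_{P_j} and x_{P_j'} with j < j', so (j, j') is a
   non-inversion of sigma.  With no non-inversion this is impossible, whatever
   the width system.  With a single one (a, b), the indices a, b are adjacent
   both in position and in value, so moving P_b to t is still an instance of
   sigma inside the segment of P, of width t - P_a < P_b - P_a: this contradicts
   local minimality for the width system [(a, b)]. *)

Lemma card_ltn_pairs K : #|[set p : 'I_K * 'I_K | p.1 < p.2]| = 'C(K, 2).
Proof.
rewrite -bin2_sum big_mkord -sum1_card.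
rewrite (eq_bigl (fun p : 'I_K * 'I_K => p.1 < p.2)) => [|p]; last by rewrite inE.
rewrite -(pair_big_dep xpredT (fun i j : 'I_K => i < j) (fun _ _ => 1)) /=.
rewrite (exchange_big_dep xpredT) //=; apply: eq_bigr => j _.
by rewrite (big_ord_narrow (ltnW (ltn_ord j))) sum1_card card_ord.
Qed.

Definition noninv K (s : 'S_K) : {set 'I_K * 'I_K} :=
  [set ij : 'I_K * 'I_K | (ij.1 < ij.2) && (s ij.1 < s ij.2)].

Lemma coxeter_len_noninv K (s : 'S_K) : coxeter_len s + #|noninv s| = 'C(K, 2).
Proof.
set L := [set p : 'I_K * 'I_K | p.1 < p.2].
set I := [set ij : 'I_K * 'I_K | s ij.2 < s ij.1].
have -> : coxeter_len s = #|L :&: I|.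
  by apply: eq_card => -[i j]; rewrite !inE.
have -> : noninv s = L :\: I.
  apply/setP => -[i j]; rewrite !inE /=.
  case: (ltnP i j) => ij; rewrite ?andbT ?andbF //.
  have sij : s i != s j by apply: contraTneq ij => /perm_inj ->; rewrite ltnn.
  by rewrite ltn_neqAle -leqNgt sij.
by rewrite cardsID card_ltn_pairs.
Qed.

Section Instances.
Variables (k : nat) (tau : 'S_k) (s : seq nat).

Lemma instance_le P : is_instance tau s P -> forall i j : 'I_k, i <= j -> P i <= P j.
Proof.
move=> [_ [Pmono _]] i j; rewrite leq_eqVlt => /orP[/eqP/val_inj -> // | ij].
exact/ltnW/Pmono.
Qed.

Lemma instance_ltn_ord P : is_instance tau s P -> forall i j : 'I_k, P i < P j -> i < j.
Proof.
by move=> hP i j; apply: contraTT; rewrite -!leqNgt; apply: instance_le.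
Qed.

Lemma instance_first_last P : is_instance tau s P -> 'I_k ->
  exists i0 i1 : 'I_k, forall i, P i0 <= P i <= P i1.
Proof.
move=> hP j; have k_gt0 : 0 < k by apply: leq_ltn_trans (ltn_ord j).
have k_gt0' : k.-1 < k by rewrite ltn_predL.
exists (Ordinal k_gt0), (Ordinal k_gt0') => i.
by rewrite !(instance_le hP) //= -ltnS prednK.
Qed.

Lemma instance_segment P c d : is_instance tau s P -> (forall i, c <= P i <= d) ->
  is_instance tau (drop c (take d.+1 s)) (fun i => P i - c).
Proof.
move=> [Ps [Pmono Pval]] Pcd; split; [|split].
- move=> i; rewrite size_drop size_take_min; have := Ps i; have := Pcd i; lia.
- by move=> i j /Pmono; have := Pcd i; have := Pcd j; lia.
- move=> i j; have /andP[ci id] := Pcd i; have /andP[cj jd] := Pcd j.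
  by rewrite !nth_drop !subnKC // !nth_take ?ltnS.
Qed.

Lemma widths_shift (w : seq ('I_k * 'I_k)) (P : 'I_k -> nat) c : (forall i, c <= P i) ->
  widths w (fun i => P i - c) = widths w P.
Proof.
by move=> cP; apply: eq_map => -[i j] /=; have := cP i; have := cP j; lia.
Qed.

Lemma locally_minimal_lex w P Q (i0 i1 : 'I_k) :
  locally_minimal tau w s P -> is_instance tau s Q ->
  (forall i, P i0 <= P i <= P i1) -> (forall i, P i0 <= Q i <= P i1) ->
  lex_le (widths w P) (widths w Q).
Proof.
move=> [_ Pmin] hQ Prange Qrange.
have [_ /(_ _ (instance_segment hQ Qrange))] :=
  Pmin _ _ (ex_intro _ i0 erefl) (ex_intro _ i1 erefl) Prange.
by rewrite !widths_shift // => i; [case/andP: (Qrange i) | case/andP: (Prange i)].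
Qed.

Hypothesis s_uniq : uniq s.

Lemma instance_gap P t : is_instance tau s P ->
  (forall j, P j < t -> nth 0 s t < nth 0 s (P j)) \/
  (forall j, t < P j -> nth 0 s (P j) < nth 0 s t) \/
  exists j j' : 'I_k, [/\ P j < t < P j',
    nth 0 s (P j) < nth 0 s t < nth 0 s (P j') & (j, j') \in noninv tau].
Proof.
move=> hP; have [Ps [_ Pval]] := hP.
case: (boolP [forall j, (P j < t) ==> (nth 0 s t < nth 0 s (P j))]) => [/forallP below|].
  by left => j /(implyP (below j)).
rewrite negb_forall => /existsP[j]; rewrite negb_imply => /andP[jt xjt].
case: (boolP [forall j, (t < P j) ==> (nth 0 s (P j) < nth 0 s t)]) => [/forallP above|].
  by right; left => j' /(implyP (above j')).
rewrite negb_forall => /existsP[j']; rewrite negb_imply => /andP[tj' xtj'].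
have t_lt : t < size s by apply: ltn_trans tj' (Ps j').
have xj : nth 0 s (P j) < nth 0 s t.
  by rewrite ltn_neqAle leqNgt xjt nth_uniq ?(ltn_trans jt) // ltn_eqF.
have xj' : nth 0 s t < nth 0 s (P j').
  by rewrite ltn_neqAle leqNgt xtj' nth_uniq // ltn_eqF.
right; right; exists j, j'; split; rewrite ?jt ?tj' ?xj ?xj' //.
by rewrite inE /= -Pval (ltn_trans xj xj') (instance_ltn_ord hP) ?(ltn_trans jt).
Qed.

Lemma instance_replace P (b : 'I_k) t : is_instance tau s P ->
  t < size s -> (forall i, P i != t) ->
  (forall i, i != b -> (P i < t) = (i < b)) ->
  (forall i, i != b -> (nth 0 s t < nth 0 s (P i)) = (tau b < tau i)) ->
  is_instance tau s (fun i => if i == b then t else P i).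
Proof.
move=> [Ps [Pmono Pval]] ts Pt Ppos Qval.
have Qval' i : i != b -> (nth 0 s (P i) < nth 0 s t) = (tau i < tau b).
  move=> ib; have xPt : nth 0 s (P i) != nth 0 s t by rewrite nth_uniq.
  have tib : tau i != tau b :> nat by apply: contra ib => /eqP/val_inj/perm_inj ->.
  by rewrite ltn_neqAle xPt leqNgt Qval // [RHS]ltn_neqAle tib ltnNge negbK.
split; [|split].
- by move=> i; case: eqP.
- move=> i j ij; case: (eqVneq i b) => [ib|ib]; case: (eqVneq j b) => [jb|jb].
  + by move: ij; rewrite ib jb ltnn.
  + have tPj : ~~ (P j < t) by rewrite Ppos // -ib -leqNgt ltnW.
    by rewrite ltn_neqAle eq_sym Pt leqNgt.
  + by rewrite (Ppos _ ib) -jb.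
  + exact: Pmono.
- move=> i j; case: (eqVneq i b) => [->|ib]; case: (eqVneq j b) => [->|jb].
  + by rewrite !ltnn.
  + exact: Qval.
  + exact: Qval'.
  + exact: Pval.
Qed.

End Instances.

Lemma perm_seq_uniq N (x : 'S_N) : uniq (perm_seq x).
Proof. by rewrite map_inj_uniq ?enum_uniq // => i j /val_inj /perm_inj. Qed.

Lemma bountiful_noninv0 k (tau : 'S_k) (w : seq ('I_k * 'I_k)) :
  noninv tau = set0 -> bountiful tau w.
Proof.
move=> noninv0 N x P [hP _] t _ _.
have [|[|[j [j' [_ _]]]]] := instance_gap (perm_seq_uniq x) t hP; try by [left | right].
by rewrite noninv0 inE.
Qed.

Section SoleNoninversion.
Variables (k : nat) (tau : 'S_k) (a b : 'I_k).
Hypothesis noninv_ab : noninv tau = [set (a, b)].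

Lemma sole_noninvP (i j : 'I_k) : i < j -> tau i < tau j -> i = a /\ j = b.
Proof.
move=> ij tij; have : (i, j) \in noninv tau by rewrite inE /= ij tij.
by rewrite noninv_ab inE => /eqP [-> ->].
Qed.

Lemma sole_noninv_lt : a < b /\ tau a < tau b.
Proof. by apply/andP; have := set11 (a, b); rewrite -noninv_ab inE. Qed.

Lemma sole_noninv_ord i : i != b -> (b < i) = (a < i).
Proof.
move=> ib; have [ab tab] := sole_noninv_lt.
apply/idP/idP => [/(ltn_trans ab) // | ai]; rewrite ltn_neqAle eq_sym ib leqNgt /=.
apply/negP => ib'; case: (ltngtP (tau a) (tau i)) => [tai|tia|/val_inj/perm_inj eai].
- by have [_ eib] := sole_noninvP ai tai; rewrite eib eqxx in ib.
- by have [eia _] := sole_noninvP ib' (ltn_trans tia tab); rewrite eia ltnn in ai.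
- by rewrite eai ltnn in ai.
Qed.

Lemma sole_noninv_val i : i != b -> (tau b < tau i) = (tau a < tau i).
Proof.
move=> ib; have [ab tab] := sole_noninv_lt.
apply/idP/idP => [/(ltn_trans tab) // | tai].
have ib' : tau i != tau b :> nat by apply: contra ib => /eqP/val_inj/perm_inj ->.
rewrite ltn_neqAle eq_sym ib' leqNgt /=; apply/negP => tib.
case: (ltngtP a i) => [ai|ia|/val_inj eai].
- by have [_ eib] := sole_noninvP ai tai; rewrite eib eqxx in ib.
- by have [eia _] := sole_noninvP (ltn_trans ia ab) tib; rewrite eia ltnn in ia.
- by rewrite eai ltnn in tai.
Qed.

Lemma bountiful_sole_noninv : bountiful tau [:: (a, b)].
Proof.
move=> N x P Plm t _ Pt; set s := perm_seq x in Plm *.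
have [hP _] := Plm; have [Ps [_ Pval]] := hP.
have [|[|[j [j' [/andP[jt tj'] /andP[xjt xtj']]]]]] :=
  instance_gap (perm_seq_uniq x) t hP; try by [left | right].
rewrite noninv_ab inE => /eqP[ej ej']; subst j j'; exfalso.
have [ab _] := sole_noninv_lt.
have ab' : a != b by rewrite neq_ltn ab.
have Qpos i : i != b -> (P i < t) = (i < b).
  move=> ib; case: (ltnP b i) => bi.
    have tPi : t < P i := leq_trans tj' (instance_le hP (ltnW bi)).
    by rewrite [LHS]ltnNge [RHS]ltnNge (ltnW tPi) (ltnW bi).
  have ia : i <= a by rewrite leqNgt -sole_noninv_ord // -leqNgt.
  by rewrite (leq_ltn_trans (instance_le hP ia) jt) ltn_neqAle ib bi.
have Qval i : i != b -> (nth 0 s t < nth 0 s (P i)) = (tau b < tau i).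
  move=> ib; rewrite sole_noninv_val //; case: (ltnP (tau a) (tau i)) => tai.
    have xbi : nth 0 s (P b) < nth 0 s (P i) by rewrite Pval sole_noninv_val.
    by rewrite (ltn_trans xtj' xbi).
  have xia : nth 0 s (P i) <= nth 0 s (P a) by rewrite leqNgt Pval -leqNgt.
  by apply/negbTE; rewrite -leqNgt ltnW // (leq_ltn_trans xia xjt).
have hQ := instance_replace (perm_seq_uniq x) hP (ltn_trans tj' (Ps b)) Pt Qpos Qval.
have [i0 [i1 Prange]] := instance_first_last hP a.
have Qrange i : P i0 <= (if i == b then t else P i) <= P i1.
  case: eqP => // _; have := Prange a; have := Prange b; lia.
have := locally_minimal_lex Plm hQ Prange Qrange.
by rewrite /widths /= eqxx (negbTE ab'); lia.
Qed.

End SoleNoninversion.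

Theorem mainTheorem18 (K : nat) (sigma : 'S_K) :
  'C(K, 2) - 1 <= coxeter_len sigma -> admits_bountiful sigma.
Proof.
move=> len_sigma.
have : #|noninv sigma| <= 1 by have := coxeter_len_noninv sigma; lia.
rewrite leq_eqVlt ltnS leqn0 => /orP[/cards1P[[a b] noninv_ab] | /eqP/cards0_eq noninv0].
- exists [:: (a, b)]; split; last exact: bountiful_sole_noninv.
  by rewrite /width_system /= andbT; case: (sole_noninv_lt noninv_ab).
- by exists [::]; split; last exact: bountiful_noninv0.
Qed.
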